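(* Let $\mathbb F$ be any field, $n\ge k\ge1$, let $\mathbf z\in\mathbb F^n$ with $\mathbf z_1=-1$, and let $\mathcal K=\{X\in M_{n\times k}(\mathbb F): \mathbf z^tX=0\}$. Then $\det_{n,k}(X)=0$ for all $X\in\mathcal K$ if and only if $$1+\sum_{\alpha=1}^k \mathbf z_{c(\alpha)}(-1)^{\alpha-c(\alpha)}=0$$ for every $k$-element subset $c=\{c(1)<\dots<c(k)\}$ of $[n]$ with $1\notin c$.
   Context: Cullis' determinant: for $n\ge k$, $\det_{n,k}(X)=\sum_{c}\operatorname{sgn}(c)\det(X[c|))$, sum over $k$-subsets $c=\{c(1)<\dots<c(k)\}$ of $[n]=\{1,\dots,n\}$, $X[c|)$ the $k\times k$ submatrix formed by the rows with indices in $c$, $\operatorname{sgn}(c)=(-1)^{\sum_{\alpha=1}^k(c(\alpha)-\alpha)}$. *)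

From HB Require Import structures.
From mathcomp Require Import all_boot all_order all_algebra.
Set Implicit Arguments. Unset Strict Implicit. Unset Printing Implicit Defensive.
Import GRing.Theory.
Local Open Scope ring_scope.

(* A k-element subset c = {c(1) < ... < c(k)} of [n] is represented by the
   strictly increasing map c : 'I_k -> 'I_n (0-based indices: alpha-1 |-> c(alpha)-1). *)
Definition incr_fun (n k : nat) (c : {ffun 'I_k -> 'I_n}) : bool :=
  [forall i : 'I_k, forall j : 'I_k, (i < j)%N ==> (c i < c j)%N].

(* sgn(c) = (-1)^(sum_alpha (c(alpha) - alpha)); differences are index-shift invariant *)
Definition cullis_sgn (F : fieldType) (n k : nat) (c : {ffun 'I_k -> 'I_n}) : F :=
  (-1) ^+ (\sum_(a < k) (c a - a))%N.

Definition cullis_det (F : fieldType) (n k : nat) (X : 'M[F]_(n, k)) : F :=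
  \sum_(c : {ffun 'I_k -> 'I_n} | incr_fun c) cullis_sgn F c * \det (rowsub c X).

From mathcomp Require Import all_boot all_order all_algebra perm zify.
Set Implicit Arguments. Unset Strict Implicit.
Import GRing.Theory.
Local Open Scope ring_scope.

(** The kernel [z^T X = 0] is the column space of the n x (n-1) matrix
    [zker_mx z] whose first row is (z_2, ..., z_n) and whose other rows form
    the identity: since z_1 = -1, X = zker_mx z *m Y where Y is X without its
    first row. Like the determinant, det_{n,k} is multilinear and alternating
    in the columns, so det_{n,k}(zker_mx z *m Y) is a combination of the
    values det_{n,k}(zker_mx z [|c]) over increasing column selections c, and
    Y can be chosen to pick out any single one of them. Finally the row
    selections d for which det(zker_mx z [d|c]) is nonzero are the shift of c
    (giving the term 1) and, for each alpha, c with c(alpha) replaced by the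
    first row (giving z_{c(alpha)} up to sign), so det_{n,k}(zker_mx z [|c])
    equals +-(1 + sum_alpha z_{c(alpha)} (-1)^(alpha - c(alpha))). *)

Section IncreasingFunctions.
Variables k n : nat.
Implicit Types c d e : {ffun 'I_k -> 'I_n}.

Lemma incrP c : incr_fun c -> forall i j : 'I_k, (i < j)%N -> (c i < c j)%N.
Proof. by move=> /forallP H i j ij; have /forallP/(_ j)/implyP := H i; apply. Qed.

Lemma incr_fun_inj c : incr_fun c -> injective c.
Proof.
move=> /incrP H i j cij; apply: val_inj.
by case: (ltngtP i j) => // [/H|/H]; rewrite cij ltnn.
Qed.

Lemma incr_fun_sorted c : incr_fun c -> sorted (relpre val ltn) (map c (enum 'I_k)).
Proof.
move=> /incrP H; apply: (homo_sorted (e := relpre val ltn)) => //.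
by rewrite -sorted_map val_enum_ord iota_ltn_sorted.
Qed.

Lemma incr_fun_ge c : incr_fun c -> forall a : 'I_k, (a <= c a)%N.
Proof.
move=> /incrP H [a ha] /=; elim: a ha => [|a IH] ha //.
have ha' : (a < k)%N by apply: ltnW.
by have := IH ha'; have := H (Ordinal ha') (Ordinal ha) (ltnSn a); lia.
Qed.

Lemma incr_fun_eq d e :
  incr_fun d -> incr_fun e -> (forall b, exists a, d b = e a) -> d = e.
Proof.
move=> incr_d incr_e de.
have sub : {subset map d (enum 'I_k) <= map e (enum 'I_k)}.
  move=> x /mapP [b _ ->]; have [a ->] := de b.
  by apply: map_f; rewrite mem_enum.
have U : uniq (map d (enum 'I_k)).
  by rewrite (map_inj_uniq (incr_fun_inj incr_d)) enum_uniq.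
have sz : (size (map e (enum 'I_k)) <= size (map d (enum 'I_k)))%N by rewrite !size_map.
have [_ same_mem] := uniq_min_size U sub sz.
have eqm : map d (enum 'I_k) = map e (enum 'I_k).
  apply: (irr_sorted_eq (leT := relpre val ltn)) => //.
  - by move=> x y w /=; apply: ltn_trans.
  - by move=> x /=; rewrite ltnn.
  - exact: incr_fun_sorted.
  - exact: incr_fun_sorted.
by apply/ffunP => i; apply: (proj2 (eq_in_map _ _ _) eqm); rewrite mem_enum.
Qed.

Lemma inj_incr_fun_perm (f : {ffun 'I_k -> 'I_n}) : injective f ->
  exists c, exists s : 'S_k, incr_fun c /\ forall i, f i = c (s i).
Proof.
move=> finj; pose S := [set f i | i in 'I_k].
have cardS : size (enum S) = k by rewrite -cardE card_imset // card_ord.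
have srt : sorted (relpre val ltn) (enum S).
  rewrite /enum_mem; apply: sorted_filter; first by move=> x y w /=; apply: ltn_trans.
  by rewrite -enumT -sorted_map val_enum_ord iota_ltn_sorted.
have memS i : f i \in enum S by rewrite mem_enum; apply: imset_f.
have rank_lt i : (index (f i) (enum S) < k)%N by rewrite -[X in (_ < X)%N]cardS index_mem.
have rank_inj : injective (fun i => Ordinal (rank_lt i)).
  move=> i j /(congr1 val) /= eqij; apply: finj.
  by rewrite -(nth_index (f i) (memS i)) eqij nth_index.
exists [ffun a => nth (f a) (enum S) a], (perm rank_inj); split.
  apply/forallP => i; apply/forallP => j; apply/implyP => ij.
  rewrite !ffunE (set_nth_default (f i) (f j)) ?cardS //.
  apply: (sorted_ltn_nth _ (f i) srt) => //=; rewrite ?inE ?cardS //.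
  by move=> x y w /=; apply: ltn_trans.
move=> i; rewrite ffunE permE /=.
by rewrite (set_nth_default (f i)) ?nth_index // cardS.
Qed.

End IncreasingFunctions.

Lemma incr_fun_neq0 k n (d : {ffun 'I_k.+1 -> 'I_n.+1}) (b : 'I_k.+1) :
  incr_fun d -> b != ord0 -> d b != ord0.
Proof.
move=> incr_d nb; apply/eqP => /(congr1 val) /= db0.
have : (0 < b)%N by rewrite lt0n; apply: contra nb => /eqP b0; apply/eqP/val_inj.
by move/(incrP incr_d (i := ord0)); rewrite db0.
Qed.

Lemma sum_indicator (R : nzRingType) (T : finType) (P : pred T) (G : T -> R) (x : T) :
  P x -> \sum_(y | P y) G y * (y == x)%:R = G x.
Proof.
move=> Px; rewrite (bigD1 x) //= eqxx mulr1 big1 ?addr0 // => y /andP [_ yx].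
by rewrite (negbTE yx) mulr0.
Qed.

Lemma signr_modn2 (R : nzRingType) (a b : nat) :
  (a %% 2 = b %% 2)%N -> (-1) ^+ a = (-1) ^+ b :> R.
Proof. by rewrite !modn2 -(signr_odd R a) -(signr_odd R b) => ->. Qed.

Section Determinants.
Variable R : comNzRingType.

Lemma det_colE k (M : 'M[R]_k) :
  \det M = \sum_(s : 'S_k) (-1) ^+ s * \prod_i M (s i) i.
Proof.
rewrite -det_tr; apply: eq_bigr => s _; congr (_ * _).
by apply: eq_bigr => i _; rewrite mxE.
Qed.

Lemma det_mulmx_colsub k m (A : 'M[R]_(k, m)) (Y : 'M[R]_(m, k)) :
  \det (A *m Y) = \sum_(f : {ffun 'I_k -> 'I_m}) (\prod_i Y (f i) i) * \det (colsub f A).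
Proof.
rewrite det_colE.
under eq_bigr => s _.
  rewrite (eq_bigr (fun i => \sum_j A (s i) j * Y j i)); last by move=> i _; rewrite !mxE.
  rewrite bigA_distr_bigA /= big_distrr /=.
  over.
rewrite exchange_big /=; apply: eq_bigr => f _.
rewrite det_colE big_distrr /=; apply: eq_bigr => s _.
rewrite mulrCA; congr (_ * _).
by rewrite big_split /= mulrC; congr (_ * _); apply: eq_bigr => i _; rewrite !mxE.
Qed.

Lemma det_incr_fun_indicator k n (d e : {ffun 'I_k -> 'I_n}) :
  incr_fun d -> incr_fun e -> \det (\matrix_(b, a) ((d b == e a)%:R : R)) = (d == e)%:R.
Proof.
move=> incr_d incr_e; have [<-|dne] := eqVneq d e.
  rewrite (_ : \matrix_(b, a) _ = 1%:M) ?det1 //; apply/matrixP => i j.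
  by rewrite !mxE (inj_eq (incr_fun_inj incr_d)).
have /existsP [b /forallP Hb] : [exists b, [forall a, d b != e a]].
  apply: contraT => /existsPn de; rewrite -(negbTE dne); apply/eqP.
  apply: incr_fun_eq => // b; have := de b.
  by rewrite negb_forall => /existsP [a]; rewrite negbK => /eqP ->; exists a.
rewrite (expand_det_row _ b) big1 // => a _.
by rewrite !mxE (negbTE (Hb a)) mul0r.
Qed.

End Determinants.

Section CullisDeterminant.
Variable F : fieldType.

Lemma cullis_det_mulmx N m k (B : 'M[F]_(N, m)) (Y : 'M[F]_(m, k)) :
  cullis_det (B *m Y) =
  \sum_(f : {ffun 'I_k -> 'I_m}) (\prod_i Y (f i) i) * cullis_det (colsub f B).
Proof.
rewrite /cullis_det.
under eq_bigr => c _ do rewrite -mul_rowsub_mx det_mulmx_colsub big_distrr /=.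
rewrite exchange_big /=; apply: eq_bigr => f _.
rewrite big_distrr /=; apply: eq_bigr => c _.
rewrite mulrCA; congr (_ * (_ * \det _)).
by apply/matrixP => i j; rewrite !mxE.
Qed.

Lemma cullis_det_col_perm N k (X : 'M[F]_(N, k)) (s : 'S_k) :
  cullis_det (col_perm s X) = (-1) ^+ s * cullis_det X.
Proof.
rewrite /cullis_det big_distrr /=; apply: eq_bigr => c _.
rewrite col_permE -mul_rowsub_mx det_mulmx det_perm odd_permV.
by rewrite [RHS]mulrC mulrA.
Qed.

Lemma cullis_det_alternate N k (X : 'M[F]_(N, k)) (i j : 'I_k) :
  i != j -> (forall r, X r i = X r j) -> cullis_det X = 0.
Proof.
move=> ij eqX; rewrite /cullis_det big1 // => c _.
by rewrite -det_tr (@determinant_alternate _ _ _ i j) ?mulr0 // => r; rewrite !mxE.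
Qed.

Lemma cullis_det_mulmx_eq0 N m k (B : 'M[F]_(N, m)) :
  (forall c : {ffun 'I_k -> 'I_m}, incr_fun c -> cullis_det (colsub c B) = 0) ->
  forall Y : 'M[F]_(m, k), cullis_det (B *m Y) = 0.
Proof.
move=> Bc0 Y; rewrite cullis_det_mulmx big1 // => f _.
have [/injectiveP finj|/injectivePn [i [j ij fij]]] := boolP (injectiveb f); last first.
  by rewrite (@cullis_det_alternate _ _ _ i j) ?mulr0 // => r; rewrite !mxE fij.
have [c [s [ic fcs]]] := inj_incr_fun_perm finj.
have -> : colsub f B = col_perm s (colsub c B) by apply/matrixP => i j; rewrite !mxE fcs.
by rewrite cullis_det_col_perm Bc0 // !mulr0.
Qed.

End CullisDeterminant.

Definition shift_fun k m (c : {ffun 'I_k -> 'I_m}) : {ffun 'I_k -> 'I_m.+1} :=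
  [ffun a => lift ord0 (c a)].

(** [replace0_fun c a] enumerates increasingly {0} together with the shift of
    the image of [c] minus [c a]. *)
Definition replace0_fun k m (c : {ffun 'I_k.+1 -> 'I_m}) (a : 'I_k.+1) :
    {ffun 'I_k.+1 -> 'I_m.+1} :=
  [ffun b => if unlift ord0 b is Some b' then lift ord0 (c (lift a b')) else ord0].

Lemma lift_mono n (h : 'I_n.+1) (i j : 'I_n) : (i < j)%N -> (lift h i < lift h j)%N.
Proof. by rewrite /= /bump; case: leqP; case: leqP; lia. Qed.

Lemma lift_ge n (h : 'I_n.+1) (i : 'I_n) : (i <= lift h i)%N.
Proof. by rewrite /= /bump; case: leqP; lia. Qed.

Section ShiftAndReplace.
Variables k m : nat.

Lemma incr_shift_fun (c : {ffun 'I_k -> 'I_m}) : incr_fun c -> incr_fun (shift_fun c).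
Proof.
move=> /incrP H; apply/forallP => i; apply/forallP => j; apply/implyP => ij.
by rewrite !ffunE !lift0 ltnS; apply: H.
Qed.

Lemma incr_replace0_fun (c : {ffun 'I_k.+1 -> 'I_m}) (a : 'I_k.+1) :
  incr_fun c -> incr_fun (replace0_fun c a).
Proof.
move=> /incrP H; apply/forallP => i; apply/forallP => j; apply/implyP.
rewrite !ffunE; case: (unliftP ord0 i) => [i' ->|->]; case: (unliftP ord0 j) => [j' ->|->] //=.
by rewrite /bump /= !add1n !ltnS => ij; apply: H; apply: lift_mono.
Qed.

Lemma shift_funP (c : {ffun 'I_k -> 'I_m.+1}) :
  incr_fun c -> (forall a, nat_of_ord (c a) <> 0%N) ->
  exists2 c' : {ffun 'I_k -> 'I_m}, incr_fun c' & c = shift_fun c'.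
Proof.
move=> ic c0; have c'_lt a : ((c a).-1 < m)%N.
  by have := c0 a; have := ltn_ord (c a); lia.
exists [ffun a => Ordinal (c'_lt a)].
  apply/forallP => i; apply/forallP => j; apply/implyP => ij; rewrite !ffunE /=.
  by have := incrP ic ij; have := c0 i; lia.
apply/ffunP => a; apply: val_inj; rewrite !ffunE /= /bump add1n.
by have := c0 a; lia.
Qed.

Lemma cullis_sgn_replace0_fun (F : fieldType) (c : {ffun 'I_k.+1 -> 'I_m}) (a : 'I_k.+1) :
  incr_fun c ->
  (-1) ^+ a * cullis_sgn F (replace0_fun c a) =
  cullis_sgn F (shift_fun c) * (-1) ^+ (shift_fun c a - a)%N.
Proof.
move=> ic; rewrite /cullis_sgn -!exprD; apply: signr_modn2.
have ge := incr_fun_ge ic.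
have shift_sum : (\sum_(b < k.+1) (shift_fun c b - b) + \sum_(b < k.+1) b
                  = \sum_(b < k.+1) c b + k.+1)%N.
  rewrite -big_split /= (eq_bigr (fun b => c b + 1)%N); last first.
    by move=> b _; rewrite ffunE lift0 subnK //; have := ge b; lia.
  by rewrite big_split /= sum_nat_const card_ord muln1.
have replace_sum : (\sum_(b < k.+1) (replace0_fun c a b - b)
                    = \sum_(b < k) (c (lift a b) - b))%N.
  rewrite big_ord_recl {1}ffunE unlift_none /= add0n.
  by apply: eq_bigr => b _; rewrite ffunE liftK !lift0 subSS.
have removed_sum : (\sum_(b < k) (c (lift a b) - b) + \sum_(b < k) b
                    = \sum_(b < k) c (lift a b))%N.
  rewrite -big_split; apply: eq_bigr => b _ /=; rewrite subnK //.
  by have := ge (lift a b); have := lift_ge a b; lia.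
have split_a : (\sum_(b < k.+1) c b = c a + \sum_(b < k) c (lift a b))%N.
  by rewrite (bigD1_ord a).
have sum_ord : (\sum_(b < k.+1) (b : nat) = \sum_(b < k) (b : nat) + k)%N.
  by rewrite big_ord_recr.
have shift_a : (shift_fun c a = (c a).+1 :> nat) by rewrite ffunE lift0.
by have := ge a; rewrite shift_a replace_sum; lia.
Qed.

End ShiftAndReplace.

Section KernelParametrization.
Variables (F : fieldType) (m : nat) (z : 'cV[F]_m.+1).

Definition zker_mx : 'M[F]_(m.+1, m) :=
  \matrix_(i, j) (if i == ord0 then z (lift ord0 j) 0 else (i == lift ord0 j)%:R).

Lemma mulmx_zker_mx : z ord0 0 = -1 -> z^T *m zker_mx = 0.
Proof.
move=> z0; apply/matrixP => i j; rewrite [i]ord1 !mxE big_ord_recl !mxE eqxx z0.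
under eq_bigr => l _ do rewrite !mxE lift_eqF (inj_eq (@lift_inj _ ord0)).
by rewrite (sum_indicator (fun l => z (lift ord0 l) 0)) // mulN1r addNr.
Qed.

Lemma zker_mx_factor k (X : 'M[F]_(m.+1, k)) :
  z ord0 0 = -1 -> z^T *m X = 0 -> X = zker_mx *m row' ord0 X.
Proof.
move=> z0 zX; apply/matrixP => i j; rewrite !mxE.
case: (unliftP ord0 i) => [i' ->|->].
  under eq_bigr => l _ do rewrite !mxE lift_eqF (inj_eq (@lift_inj _ ord0)) mulrC eq_sym.
  by rewrite (sum_indicator (fun l => X (lift ord0 l) j)).
under eq_bigr => l _ do rewrite !mxE eqxx.
have := congr1 (fun M : 'M[F]_(1, k) => M 0 j) zX.
rewrite !mxE big_ord_recl !mxE z0 mulN1r => /eqP; rewrite addrC subr_eq0 => /eqP <-.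
by apply: eq_bigr => l _; rewrite mxE.
Qed.

Section Minors.
Variables (k : nat) (c : {ffun 'I_k.+1 -> 'I_m}) (d : {ffun 'I_k.+1 -> 'I_m.+1}).
Hypotheses (incr_c : incr_fun c) (incr_d : incr_fun d).

Lemma det_zker_mx_shift : d ord0 != ord0 ->
  \det (rowsub d (colsub c zker_mx)) = (d == shift_fun c)%:R.
Proof.
move=> d0; rewrite -det_incr_fun_indicator ?incr_shift_fun //; congr (\det _).
apply/matrixP => b a; rewrite !mxE ffunE.
have [->|nb] := eqVneq b ord0; first by rewrite (negbTE d0).
by rewrite (negbTE (incr_fun_neq0 incr_d nb)).
Qed.

(** Expansion along the first row, where the minor of entry [a] is an
    indicator matrix. *)
Lemma det_zker_mx_replace0 : d ord0 = ord0 ->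
  \det (rowsub d (colsub c zker_mx)) =
  \sum_(a < k.+1) z (lift ord0 (c a)) 0 * (-1) ^+ a * (d == replace0_fun c a)%:R.
Proof.
move=> d0; rewrite (expand_det_row _ ord0); apply: eq_bigr => a _.
rewrite !mxE d0 eqxx /cofactor /= add0n mulrA.
pose d1 := [ffun b : 'I_k => (d (lift ord0 b) : 'I_m.+1)].
pose e1 := [ffun b : 'I_k => lift ord0 (c (lift a b))].
have -> : row' ord0 (col' a (rowsub d (colsub c zker_mx))) =
          \matrix_(b, a') ((d1 b == e1 a')%:R).
  apply/matrixP => b a'; rewrite !mxE !ffunE.
  by rewrite (negbTE (incr_fun_neq0 incr_d _)) // eq_liftF.
have id1 : incr_fun d1.
  apply/forallP => i; apply/forallP => j; apply/implyP => ij.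
  by rewrite !ffunE; apply: (incrP incr_d); rewrite !lift0.
have ie1 : incr_fun e1.
  apply/forallP => i; apply/forallP => j; apply/implyP => ij.
  by rewrite !ffunE !lift0 ltnS; apply: (incrP incr_c); apply: lift_mono.
have -> : (d == replace0_fun c a) = (d1 == e1).
  apply/eqP/eqP => E; apply/ffunP => b; first by rewrite !ffunE E ffunE liftK.
  rewrite ffunE; case: (unliftP ord0 b) => [b' ->|->] //.
  by have := congr1 (fun f : {ffun 'I_k -> 'I_m.+1} => f b') E; rewrite !ffunE.
by rewrite det_incr_fun_indicator.
Qed.

Lemma det_zker_mx_minor :
  \det (rowsub d (colsub c zker_mx)) =
  (d == shift_fun c)%:R +
  \sum_(a < k.+1) z (lift ord0 (c a)) 0 * (-1) ^+ a * (d == replace0_fun c a)%:R.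
Proof.
have [d0|d0] := eqVneq (d ord0) ord0.
  rewrite det_zker_mx_replace0 // (_ : d == _ = false) ?add0r //.
  by apply/negbTE/eqP => E; move/eqP: d0; rewrite E ffunE lift_eqF.
rewrite det_zker_mx_shift // big1 ?addr0 // => a _.
rewrite (_ : d == _ = false) ?mulr0 //.
by apply/negbTE/eqP => E; move: d0; rewrite E ffunE unlift_none eqxx.
Qed.

End Minors.

Lemma cullis_det_colsub_zker_mx k (c : {ffun 'I_k.+1 -> 'I_m}) : incr_fun c ->
  cullis_det (colsub c zker_mx) =
  cullis_sgn F (shift_fun c) *
  (1 + \sum_(a < k.+1) z (shift_fun c a) 0 * (-1) ^+ (shift_fun c a - a)%N).
Proof.
move=> ic; rewrite /cullis_det.
under eq_bigr => d incr_d do rewrite (det_zker_mx_minor ic incr_d) mulrDr big_distrr /=.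
rewrite big_split /= sum_indicator ?incr_shift_fun //.
rewrite exchange_big /= mulrDr mulr1 big_distrr /=; congr (_ + _).
apply: eq_bigr => a _.
under eq_bigr => d _ do rewrite mulrCA.
rewrite -big_distrr /= sum_indicator ?incr_replace0_fun //.
by rewrite -mulrA cullis_sgn_replace0_fun // [shift_fun c a]ffunE mulrCA.
Qed.

End KernelParametrization.

Theorem mainTheorem5 (F : fieldType) (n k : nat) (hk : (1 <= k)%N) (hkn : (k <= n)%N)
  (z : 'cV[F]_n) (hz1 : forall i : 'I_n, nat_of_ord i = 0%N -> z i 0 = -1) :
  (forall X : 'M[F]_(n, k), z^T *m X = 0 -> cullis_det X = 0) <->
  (forall c : {ffun 'I_k -> 'I_n}, incr_fun c ->
     (forall a : 'I_k, nat_of_ord (c a) <> 0%N) ->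
     1 + \sum_(a < k) z (c a) 0 * (-1) ^+ (c a - a)%N = 0).
Proof.
case: k hk hkn => [//|k] _ hkn; case: n hkn z hz1 => [//|m] _ z hz1.
have z0 : z ord0 0 = -1 by apply: hz1.
split=> [vanish c ic c0 | sums_eq0 X zX].
  have [c' ic' ->] := shift_funP ic c0.
  have zB : z^T *m colsub c' (zker_mx z) = 0.
    by rewrite mulmx_colsub mulmx_zker_mx //; apply/matrixP => i j; rewrite !mxE.
  have /eqP := vanish _ zB; rewrite cullis_det_colsub_zker_mx //.
  by rewrite mulf_eq0 signr_eq0 => /eqP.
rewrite (zker_mx_factor z0 zX); apply: cullis_det_mulmx_eq0 => c ic.
rewrite cullis_det_colsub_zker_mx // sums_eq0 ?mulr0 ?incr_shift_fun //.
by move=> a; rewrite ffunE lift0.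
Qed.
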